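(* Let $\widehat A=\mathbb{C}[[x,y,z]]$ with maximal ideal $\widehat M=(x,y,z)$, and let $F=(f,g,h)$ be a Poisson triple on $\widehat A$ such that at most one of $f,g,h$ lies in $\widehat M$. Then $F$ is m-exact, i.e. there exist $b,d\in\widehat A$ with $F=b\,\mathrm{grad}(d)=(b d_x,b d_y,b d_z)$.
   Context: $F\in\widehat A^3$ is a Poisson triple if there is a Poisson bracket on $\widehat A$ with $\{y,z\}=f$, $\{z,x\}=g$, $\{x,y\}=h$. Subscripts denote formal partial derivatives. *)

From HB Require Import structures.
From mathcomp Require Import all_boot all_order all_algebra.
From mathcomp Require Import complex.
From mathcomp Require Import Rstruct.
Set Implicit Arguments. Unset Strict Implicit. Unset Printing Implicit Defensive.
Import Order.TTheory GRing.Theory Num.Theory.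
Local Open Scope ring_scope.

Definition CC := complex Rdefinitions.R.

(* Formal power series in x,y,z over CC: coefficient of x^i y^j z^k. *)
Definition ps := nat -> nat -> nat -> CC.

Definition ps_add (a b : ps) : ps := fun i j k => a i j k + b i j k.
Definition ps_opp (a : ps) : ps := fun i j k => - a i j k.
Definition ps_zero : ps := fun _ _ _ => 0.
Definition ps_mul (a b : ps) : ps := fun i j k =>
  \sum_(p < i.+1) \sum_(q < j.+1) \sum_(r < k.+1)
     a p q r * b (i - p)%N (j - q)%N (k - r)%N.

Definition ps_x : ps := fun i j k => if (i == 1%N) && (j == 0%N) && (k == 0%N) then 1 else 0.
Definition ps_y : ps := fun i j k => if (i == 0%N) && (j == 1%N) && (k == 0%N) then 1 else 0.
Definition ps_z : ps := fun i j k => if (i == 0%N) && (j == 0%N) && (k == 1%N) then 1 else 0.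

Definition ps_dx (a : ps) : ps := fun i j k => a i.+1 j k *+ i.+1.
Definition ps_dy (a : ps) : ps := fun i j k => a i j.+1 k *+ j.+1.
Definition ps_dz (a : ps) : ps := fun i j k => a i j k.+1 *+ k.+1.

Definition in_max (a : ps) : bool := a 0%N 0%N 0%N == 0.

(* A (formal) Poisson bracket on C[[x,y,z]]: an antisymmetric bracket
   satisfying the Jacobi identity, which is a formal biderivation, i.e.
   {a,b} = sum_{u,v} a_u b_v {u,v} over the variables u,v in {x,y,z}
   (equivalently: a C-bilinear, (x,y,z)-adically continuous biderivation). *)
Definition poisson_bracket (br : ps -> ps -> ps) : Prop :=
  [/\ (forall a b, br a b = ps_opp (br b a)),
      (forall a b c, ps_add (br a (br b c)) (ps_add (br b (br c a)) (br c (br a b)))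
                     = ps_zero)
    & (forall a b,
        let vars := [:: (ps_x, ps_dx); (ps_y, ps_dy); (ps_z, ps_dz)] in
        br a b = foldr ps_add ps_zero
          [seq ps_mul (ps_mul (u.2 a) (v.2 b)) (br u.1 v.1) | u <- vars, v <- vars])].

Definition poisson_triple (f g h : ps) : Prop :=
  exists br, poisson_bracket br /\
    [/\ br ps_y ps_z = f, br ps_z ps_x = g & br ps_x ps_y = h].

Definition m_exact (f g h : ps) : Prop :=
  exists b d : ps,
    [/\ f = ps_mul b (ps_dx d), g = ps_mul b (ps_dy d) & h = ps_mul b (ps_dz d)].

From HB Require Import structures.
From mathcomp Require Import all_boot all_order all_algebra complex Rstruct boolp ring.
Set Implicit Arguments. Unset Strict Implicit. Unset Printing Implicit Defensive.
Import Order.TTheory GRing.Theory Num.Theory.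
Local Open Scope ring_scope.

(* The Jacobi identity for the bracket says F . curl F = 0.  If h is a unit,
   put P = f/h and Q = g/h: then P_y - Q_x + P Q_z - Q P_z = 0, which is the
   integrability condition for the derivations D_x - P D_z and D_y - Q D_z.
   A common first integral d is built by two coefficient recursions: first
   e(y,z) with e_y = Q(0,y,z) e_z and e(0,z) = z, then d with d_x = P d_z and
   d(0,y,z) = e.  The series E = d_y - Q d_z then solves E_x = P E_z with
   E(0,y,z) = 0, so it vanishes.  Hence F = (h/d_z) grad d, where d_z is a unit
   because d_z(0) = 1.  If h is not a unit then f is one, and exchanging x and
   z reduces to the first case. *)

Section CourseOfValues.
(* [t0] only fills the argument of [step 0], which [step_ext] makes irrelevant. *)
Variables (T : Type) (t0 : T) (step : nat -> (nat -> T) -> T).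
Hypothesis step_ext :
  forall n p q, (forall j, (j < n)%N -> p j = q j) -> step n p = step n q.

Fixpoint rec_upto (n : nat) : nat -> T :=
  if n is n'.+1 then fun i => if i == n then step n (rec_upto n') else rec_upto n' i
  else fun _ => step 0 (fun _ => t0).

Lemma rec_upto_stable n i : (i <= n)%N -> rec_upto n i = rec_upto i i.
Proof.
elim: n => [|n IH]; first by rewrite leqn0 => /eqP ->.
by rewrite leq_eqVlt => /orP [/eqP -> // | lt_in] /=; rewrite (ltn_eqF lt_in) IH.
Qed.

Lemma course_of_values_rec : exists b : nat -> T, forall n, b n = step n b.
Proof.
exists (fun i => rec_upto i i) => -[|n] /=; first exact: step_ext.
by rewrite eqxx; apply: step_ext => j lt_jn; apply: rec_upto_stable.
Qed.

End CourseOfValues.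

Definition derivation (R : pzRingType) (d : R -> R) :=
  {morph d : x y / x + y} /\ forall x y, d (x * y) = d x * y + x * d y.

Section DerivationTheory.
Variables (R : pzRingType) (d : R -> R).
Hypothesis der_d : derivation d.

Lemma derD : {morph d : x y / x + y}. Proof. by case: der_d. Qed.
Lemma derM x y : d (x * y) = d x * y + x * d y. Proof. by case: der_d. Qed.
Lemma der0 : d 0 = 0. Proof. by apply: (addrI (d 0)); rewrite -derD !addr0. Qed.
Lemma derN x : d (- x) = - d x.
Proof. by apply: (addrI (d x)); rewrite -derD !subrr der0. Qed.
Lemma derB x y : d (x - y) = d x - d y. Proof. by rewrite derD derN. Qed.
Lemma derMn x n : d (x *+ n) = d x *+ n.
Proof. by elim: n => [|n IH]; rewrite ?mulr0n ?der0 // !mulrS derD IH. Qed.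
Lemma der_sum I (r : seq I) (P : pred I) (F : I -> R) :
  d (\sum_(j <- r | P j) F j) = \sum_(j <- r | P j) d (F j).
Proof. by elim/big_rec2: _ => [|j x y _ <-]; rewrite ?der0 ?derD. Qed.

End DerivationTheory.

Definition divisible (R : pzRingType) (dv : nat -> R -> R) :=
  forall n r, dv n r *+ n.+1 = r.

Lemma divisible_torsionfree (R : comPzRingType) (dv : nat -> R -> R) :
  divisible dv -> forall (r : R) n, r *+ n.+1 = 0 -> r = 0.
Proof.
move=> dvK r n r0.
by rewrite -[r]mulr1 -(dvK n 1) mulrnAr -mulrnAl r0 mul0r.
Qed.

Definition ser (R : Type) := nat -> R.

Section Series.
Variable R : comPzRingType.
Local Notation S := (ser R).

HB.instance Definition _ := Choice.on S.

Definition ser_add (a b : S) : S := fun i => a i + b i.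
Definition ser_opp (a : S) : S := fun i => - a i.
Definition ser_mul (a b : S) : S := fun i => \sum_(j < i.+1) a j * b (i - j)%N.
Definition ser_one : S := fun i => if i == 0%N then 1 else 0.

Fact ser_addA : associative ser_add.
Proof. by move=> a b c; apply: funext => i; rewrite /ser_add addrA. Qed.
Fact ser_addC : commutative ser_add.
Proof. by move=> a b; apply: funext => i; rewrite /ser_add addrC. Qed.
Fact ser_add0 : left_id (fun _ => 0) ser_add.
Proof. by move=> a; apply: funext => i; rewrite /ser_add add0r. Qed.
Fact ser_addN : left_inverse (fun _ => 0) ser_opp ser_add.
Proof. by move=> a; apply: funext => i; rewrite /ser_add addNr. Qed.
HB.instance Definition _ := GRing.isZmodule.Build S ser_addA ser_addC ser_add0 ser_addN.

Fact ser_mul_rev a b i : ser_mul a b i = \sum_(j < i.+1) a (i - j)%N * b j.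
Proof.
rewrite /ser_mul (reindex_inj rev_ord_inj) /=.
by apply: eq_bigr => j _; rewrite subSS subKn // -ltnS.
Qed.

Fact ser_mulA : associative ser_mul.
Proof.
move=> p q r; apply: funext => i; rewrite [LHS]/ser_mul [RHS]ser_mul_rev.
transitivity (\sum_(j < i.+1) \sum_(k < i.+1 | (k <= i - j)%N)
                 p j * (q (i - j - k)%N * r k)).
  apply: eq_bigr => /= j _; rewrite ser_mul_rev big_distrr /=.
  by rewrite (big_ord_narrow_leq (leq_subr _ _)).
rewrite (exchange_big_dep predT) //=; apply: eq_bigr => k _.
transitivity (\sum_(j < i.+1 | (j <= i - k)%N) p j * (q (i - j - k)%N * r k)).
  apply: eq_bigl => j; rewrite -ltnS -(ltnS j) -!subSn ?leq_ord //.
  by rewrite -subn_gt0 -(subn_gt0 j) -!subnDA addnC.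
rewrite (big_ord_narrow_leq (leq_subr _ _)) /ser_mul big_distrl /=.
by apply: eq_bigr => j _; rewrite -!subnDA addnC mulrA.
Qed.

Fact ser_mulC : commutative ser_mul.
Proof.
move=> a b; apply: funext => i; rewrite ser_mul_rev /ser_mul.
by apply: eq_bigr => j _; rewrite mulrC.
Qed.

Fact ser_mul1 : left_id ser_one ser_mul.
Proof.
move=> p; apply: funext => i; rewrite /ser_mul big_ord_recl subn0 /ser_one /= mul1r.
by rewrite big1 ?addr0 // => j _; rewrite mul0r.
Qed.

Fact ser_mulDl : left_distributive ser_mul ser_add.
Proof.
move=> a b c; apply: funext => i; rewrite /ser_mul /ser_add -big_split /=.
by apply: eq_bigr => j _; rewrite mulrDl.
Qed.

HB.instance Definition _ :=
  GRing.Zmodule_isComPzRing.Build S ser_mulA ser_mulC ser_mul1 ser_mulDl.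

Lemma serD (a b : S) i : (a + b) i = a i + b i. Proof. by []. Qed.
Lemma serB (a b : S) i : (a - b) i = a i - b i. Proof. by []. Qed.
Lemma serM (a b : S) i : (a * b) i = \sum_(j < i.+1) a j * b (i - j)%N.
Proof. by []. Qed.
Lemma ser1 i : (1 : S) i = if i == 0%N then 1 else 0. Proof. by []. Qed.
Lemma serMn (a : S) n i : (a *+ n) i = a i *+ n.
Proof. by elim: n => [|n IH]; rewrite ?mulr0n // !mulrS serD IH. Qed.
Lemma serM0 (a b : S) : (a * b) 0%N = a 0%N * b 0%N.
Proof. by rewrite serM big_ord_recl big_ord0 addr0. Qed.
Lemma ser_sum I (r : seq I) (P : pred I) (F : I -> S) i :
  (\sum_(j <- r | P j) F j) i = \sum_(j <- r | P j) F j i.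
Proof. by elim/big_rec2: _ => // j x y _ <-. Qed.

Lemma serM_eq0 (a b : S) n : (forall j, (j <= n)%N -> b j = 0) -> (a * b) n = 0.
Proof. by move=> b0; rewrite serM big1 // => j _; rewrite b0 ?mulr0 // leq_subr. Qed.

Lemma ser_unit (a : S) c : c * a 0%N = 1 -> exists b : S, b * a = 1.
Proof.
move=> ca1.
pose step n (p : nat -> R) :=
  if n is n'.+1 then - c * \sum_(j < n) p j * a (n - j)%N else c.
have [b bE] : exists b : nat -> R, forall n, b n = step n b.
  apply: (course_of_values_rec 0) => -[|n] p q pq //=.
  by congr (_ * _); apply: eq_bigr => j _; rewrite pq.
exists b; apply: funext => -[|n]; rewrite serM ser1.
  by rewrite big_ord_recl big_ord0 addr0 bE /= subn0.
by rewrite big_ord_recr /= subnn bE /= mulrAC mulNr ca1 mulN1r subrr.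
Qed.

Definition ser_deriv (a : S) : S := fun i => a i.+1 *+ i.+1.
Definition ser_map (d : R -> R) (a : S) : S := fun i => d (a i).

Lemma ser_derivM a b : ser_deriv (a * b) = ser_deriv a * b + a * ser_deriv b.
Proof.
apply: funext => i; rewrite serD !serM /ser_deriv serM.
transitivity (\sum_(j < i.+2) (a j * b (i.+1 - j)%N *+ j) +
              \sum_(j < i.+2) (a j * b (i.+1 - j)%N *+ (i.+1 - j))).
  rewrite -big_split /= -sumrMnl; apply: eq_bigr => j _.
  by rewrite -mulrnDr subnKC //; exact: ltn_ord j.
congr (_ + _).
  rewrite big_ord_recl /= mulr0n add0r; apply: eq_bigr => j _.
  by rewrite /bump /= add1n subSS mulrnAl.
rewrite big_ord_recr /= subnn mulr0n addr0; apply: eq_bigr => j _.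
by rewrite subSn ?mulrnAr // -ltnS ltn_ord.
Qed.

Lemma ser_deriv_derivation : derivation ser_deriv.
Proof.
split; last exact: ser_derivM.
by move=> a b; apply: funext => i; rewrite /ser_deriv !serD mulrnDl.
Qed.

Lemma ser_map_derivation d : derivation d -> derivation (ser_map d).
Proof.
move=> der_d; split=> [a b | a b]; apply: funext => i; rewrite /ser_map serD.
  exact: derD.
rewrite !serM (der_sum der_d) -big_split /=.
by apply: eq_bigr => j _; rewrite (derM der_d).
Qed.

Lemma ser_deriv_map d a :
  derivation d -> ser_deriv (ser_map d a) = ser_map d (ser_deriv a).
Proof. by move=> der_d; apply: funext => i; rewrite /ser_deriv /ser_map derMn. Qed.

Lemma divisible_ser dv : divisible dv -> divisible (fun n => ser_map (dv n)).
Proof. by move=> dvK n r; apply: funext => i; rewrite serMn /ser_map dvK. Qed.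

Section FirstOrderODE.
Variables (d : R -> R) (dv : nat -> R -> R).
Hypothesis dvK : divisible dv.

(* The equation y' = Q d(y) determines y i.+1 from y 0, ..., y i. *)
Lemma ser_ode_exists (Q : S) (e : R) :
  exists y : S, y 0%N = e /\ ser_deriv y = Q * ser_map d y.
Proof.
pose step n (p : nat -> R) :=
  if n is n'.+1 then dv n' (\sum_(j < n) Q j * d (p (n' - j)%N)) else e.
have [y yE] : exists y : nat -> R, forall n, y n = step n y.
  apply: (course_of_values_rec 0) => -[|n] p q pq //=.
  by congr (dv _ _); apply: eq_bigr => j _; rewrite pq // ltnS leq_subr.
exists y; split; first by rewrite yE.
by apply: funext => n; rewrite /ser_deriv yE /= dvK serM.
Qed.

Lemma ser_ode_unique (Q E : S) :
  d 0 = 0 -> E 0%N = 0 -> ser_deriv E = Q * ser_map d E -> E = 0.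
Proof.
move=> d0 E0 EE; suff E_eq0 n i : (i <= n)%N -> E i = 0.
  by apply: funext => i; rewrite (E_eq0 i i).
elim: n i => [|n IH] i; first by rewrite leqn0 => /eqP ->.
rewrite leq_eqVlt => /orP [/eqP -> | ]; last exact: IH.
apply: (divisible_torsionfree dvK (n := n)).
have := congr1 (fun u => u n) EE; rewrite /ser_deriv /= => ->.
by apply: serM_eq0 => j lt_jn; rewrite /ser_map IH.
Qed.

End FirstOrderODE.

End Series.

Definition ps1 := ser CC.
Definition ps2 := ser ps1.
Definition ps3 := ser ps2.

Definition divC n (r : CC) : CC := r / n.+1%:R.

Lemma divisibleC : divisible divC.
Proof. by move=> n r; rewrite /divC -[LHS]mulr_natr divfK // pnatr_eq0. Qed.

Definition div1 n : ps1 -> ps1 := ser_map (divC n).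
Definition div2 n : ps2 -> ps2 := ser_map (div1 n).
Definition div3 n : ps3 -> ps3 := ser_map (div2 n).

Lemma divisible1 : divisible div1. Proof. exact/divisible_ser/divisibleC. Qed.
Lemma divisible2 : divisible div2. Proof. exact/divisible_ser/divisible1. Qed.
Lemma divisible3 : divisible div3. Proof. exact/divisible_ser/divisible2. Qed.

(* A series [a : ps3] is read as [\sum a i j k x^i y^j z^k]. *)
Definition Dx : ps3 -> ps3 := @ser_deriv ps2.
Definition Dy : ps3 -> ps3 := ser_map (@ser_deriv ps1).
Definition Dz : ps3 -> ps3 := ser_map (ser_map (@ser_deriv CC)).

Lemma Dx_derivation : derivation Dx. Proof. exact: ser_deriv_derivation. Qed.
Lemma Dy_derivation : derivation Dy.
Proof. exact/ser_map_derivation/ser_deriv_derivation. Qed.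
Lemma Dz_derivation : derivation Dz.
Proof. exact/ser_map_derivation/ser_map_derivation/ser_deriv_derivation. Qed.

Lemma DxDy a : Dx (Dy a) = Dy (Dx a).
Proof. exact/ser_deriv_map/ser_deriv_derivation. Qed.
Lemma DxDz a : Dx (Dz a) = Dz (Dx a).
Proof. exact/ser_deriv_map/ser_map_derivation/ser_deriv_derivation. Qed.
Lemma DyDz a : Dy (Dz a) = Dz (Dy a).
Proof.
apply: funext => i; rewrite /Dy /Dz /ser_map.
exact/ser_deriv_map/ser_deriv_derivation.
Qed.

Lemma ps_addE (a b : ps) : ps_add a b = (a : ps3) + b. Proof. by []. Qed.
Lemma ps_zeroE : ps_zero = (0 : ps3). Proof. by []. Qed.
Lemma ps_mulE (a b : ps) : ps_mul a b = (a : ps3) * b.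
Proof.
apply: funext => i; apply: funext => j; apply: funext => k.
rewrite /ps_mul serM !ser_sum; apply: eq_bigr => p _.
by rewrite serM !ser_sum; apply: eq_bigr => q _; rewrite serM.
Qed.
Lemma ps_dxE (a : ps) : ps_dx a = Dx a.
Proof.
by apply: funext => i; apply: funext => j; apply: funext => k; rewrite /Dx /ser_deriv !serMn.
Qed.
Lemma ps_dyE (a : ps) : ps_dy a = Dy a.
Proof.
by apply: funext => i; apply: funext => j; apply: funext => k; rewrite /Dy /ser_map /ser_deriv !serMn.
Qed.
Lemma ps_dzE (a : ps) : ps_dz a = Dz a. Proof. by []. Qed.

Lemma ps3_one i j k :
  (1 : ps3) i j k = if [&& i == 0%N, j == 0%N & k == 0%N] then 1 else 0.
Proof. by rewrite ser1; case: i => [|i] /=; rewrite ?ser1 //; case: j. Qed.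

Ltac by_coefficients :=
  apply: funext => -[|?]; apply: funext => -[|?]; apply: funext => -[|?];
  rewrite ?ps3_one /ps_dx /ps_dy /ps_dz /ps_x /ps_y /ps_z /= ?mul0rn ?andbF //;
  rewrite ?andFb ?andbF /= ?mul0rn //.

Lemma Dx_x : Dx ps_x = 1. Proof. rewrite -ps_dxE; by_coefficients. Qed.
Lemma Dy_x : Dy ps_x = 0. Proof. rewrite -ps_dyE; by_coefficients. Qed.
Lemma Dz_x : Dz ps_x = 0. Proof. rewrite -ps_dzE; by_coefficients. Qed.
Lemma Dx_y : Dx ps_y = 0. Proof. rewrite -ps_dxE; by_coefficients. Qed.
Lemma Dy_y : Dy ps_y = 1. Proof. rewrite -ps_dyE; by_coefficients. Qed.
Lemma Dz_y : Dz ps_y = 0. Proof. rewrite -ps_dzE; by_coefficients. Qed.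
Lemma Dx_z : Dx ps_z = 0. Proof. rewrite -ps_dxE; by_coefficients. Qed.
Lemma Dy_z : Dy ps_z = 0. Proof. rewrite -ps_dyE; by_coefficients. Qed.
Lemma Dz_z : Dz ps_z = 1. Proof. rewrite -ps_dzE; by_coefficients. Qed.

Lemma ps3_unit (a : ps3) : a 0%N 0%N 0%N != 0 -> exists ai : ps3, ai * a = 1.
Proof.
move=> a0; have [b1 b1a] := @ser_unit CC (a 0%N 0%N) _ (mulVf a0).
have [b2 b2a] := @ser_unit ps1 (a 0%N) _ b1a.
exact: (@ser_unit ps2 a _ b2a).
Qed.

Definition curl_dot (f g h : ps3) : ps3 :=
  f * (Dz g - Dy h) + g * (Dx h - Dz f) + h * (Dy f - Dx g).

Lemma bracket_expand br (a b : ps) : poisson_bracket br ->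
  (br a b : ps3) =
   Dx a * Dx b * br ps_x ps_x + Dx a * Dy b * br ps_x ps_y + Dx a * Dz b * br ps_x ps_z +
   Dy a * Dx b * br ps_y ps_x + Dy a * Dy b * br ps_y ps_y + Dy a * Dz b * br ps_y ps_z +
   Dz a * Dx b * br ps_z ps_x + Dz a * Dy b * br ps_z ps_y + Dz a * Dz b * br ps_z ps_z.
Proof.
case=> _ _ ->; rewrite /= !ps_addE !ps_mulE ps_zeroE !ps_dxE !ps_dyE !ps_dzE.
ring.
Qed.

(* Jacobi at (x, y, z), each bracket expanded by the biderivation rule. *)
Lemma poisson_triple_curl_dot f g h : poisson_triple f g h -> curl_dot f g h = 0.
Proof.
case=> br [[anti jacobi bider] [brf brg brh]].
have brE a b := bracket_expand a b (And3 anti jacobi bider).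
have br_anti a b : (br a b : ps3) = - (br b a : ps3) by exact: anti.
have br_diag a : (br a a : ps3) = 0.
  by apply: (divisible_torsionfree divisible3 (n := 1)); rewrite mulr2n {1}br_anti addNr.
have := jacobi ps_x ps_y ps_z; rewrite brf brg brh !ps_addE ps_zeroE.
rewrite (brE ps_x f) (brE ps_y g) (brE ps_z h) !br_diag.
rewrite (br_anti ps_y ps_x) (br_anti ps_z ps_y) (br_anti ps_x ps_z) brf brg brh.
rewrite Dx_x Dy_x Dz_x Dx_y Dy_y Dz_y Dx_z Dy_z Dz_z => jac.
by rewrite -[RHS]jac /curl_dot; ring.
Qed.

Lemma integrable_first_integral (P Q : ps3) :
  Dy P - Dx Q + P * Dz Q - Q * Dz P = 0 ->
  exists d : ps3, [/\ Dx d = P * Dz d, Dy d = Q * Dz d & Dz d 0%N 0%N 0%N = 1].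
Proof.
move=> integrable.
pose z : ps1 := fun k => if k == 1%N then 1 else 0.
have [e [e0 eE]] := ser_ode_exists (@ser_deriv CC) divisible1 (Q 0%N) z.
have [d [d0 Dx_d]] := ser_ode_exists (ser_map (@ser_deriv CC)) divisible2 P e.
change (Dx d = P * Dz d) in Dx_d.
pose E := Dy d - Q * Dz d.
have E_eq0 : E = 0.
  apply: (ser_ode_unique divisible2 (Q := P)).
  - exact/der0/ser_map_derivation/ser_deriv_derivation.
  - by rewrite /E serB serM0 /Dy /Dz /ser_map d0 eE subrr.
  apply/eqP; rewrite -subr_eq0; apply/eqP.
  rewrite -[ser_deriv E]/(Dx E) -[ser_map _ E]/(Dz E) /E.
  rewrite (derB Dx_derivation) (derM Dx_derivation) DxDy DxDz Dx_d.
  rewrite (derM Dy_derivation) (derM Dz_derivation) DyDz.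
  rewrite (derB Dz_derivation) (derM Dz_derivation).
  transitivity (Dz d * (Dy P - Dx Q + P * Dz Q - Q * Dz P)); first ring.
  by rewrite integrable mulr0.
exists d; split => //; first by apply/eqP; rewrite -subr_eq0 -/E E_eq0.
by rewrite /Dz /ser_map d0 e0.
Qed.

(* With P = f/h and Q = g/h, curl_dot f g h = h^2 times the integrability
   defect of P and Q. *)
Lemma curl_dot_exact (f g h hi : ps3) :
  hi * h = 1 -> curl_dot f g h = 0 ->
  exists b d : ps3, [/\ f = b * Dx d, g = b * Dy d & h = b * Dz d].
Proof.
move=> hiK curl0.
have [P fE] : exists P, f = P * h by exists (f * hi); rewrite -mulrA hiK mulr1.
have [Q gE] : exists Q, g = Q * h by exists (g * hi); rewrite -mulrA hiK mulr1.
have integrable : Dy P - Dx Q + P * Dz Q - Q * Dz P = 0.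
  have := congr1 (fun u => hi * hi * u) curl0; rewrite mulr0 /curl_dot fE gE.
  rewrite !(derM Dz_derivation) !(derM Dy_derivation) !(derM Dx_derivation) => <-.
  transitivity ((hi * h) * (hi * h) * (Dy P - Dx Q + P * Dz Q - Q * Dz P)).
    by rewrite hiK !mul1r.
  ring.
have [d [Dx_d Dy_d Dz_d0]] := integrable_first_integral integrable.
have [ci ciK] : exists ci, ci * Dz d = 1 by apply: ps3_unit; rewrite Dz_d0 oner_neq0.
exists (h * ci), d; split.
- by rewrite fE Dx_d -[LHS]mulr1 -ciK; ring.
- by rewrite gE Dy_d -[LHS]mulr1 -ciK; ring.
- by rewrite -mulrA ciK mulr1.
Qed.

(* Locked: unfolded, [swap_xz ?a] would be a higher-order pattern unifying
   with every series, which makes rewriting diverge. *)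
Fact swap_xz_key : unit. Proof. by []. Qed.
Definition swap_xz : ps3 -> ps3 := locked_with swap_xz_key (fun a i j k => a k j i).
Canonical swap_xz_unlockable := [unlockable fun swap_xz].

Lemma swap_xzE a i j k : swap_xz a i j k = a k j i. Proof. by rewrite unlock. Qed.
Lemma swap_xzK : involutive swap_xz. Proof. by move=> a; rewrite unlock. Qed.
Lemma swap_xz0 : swap_xz 0 = 0. Proof. by rewrite unlock. Qed.
Lemma swap_xzD a b : swap_xz (a + b) = swap_xz a + swap_xz b.
Proof. by rewrite unlock. Qed.
Lemma swap_xzN a : swap_xz (- a) = - swap_xz a. Proof. by rewrite unlock. Qed.

Lemma swap_xzM a b : swap_xz (a * b) = swap_xz a * swap_xz b.
Proof.
rewrite unlock -!ps_mulE; apply: funext => i; apply: funext => j; apply: funext => k.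
rewrite /ps_mul.
under eq_bigr => p _ do rewrite exchange_big.
rewrite exchange_big.
by under eq_bigr => r _ do rewrite exchange_big.
Qed.

Lemma Dx_swap a : Dx (swap_xz a) = swap_xz (Dz a).
Proof. by rewrite unlock -ps_dxE -ps_dzE. Qed.
Lemma Dy_swap a : Dy (swap_xz a) = swap_xz (Dy a).
Proof. by rewrite unlock -!ps_dyE. Qed.
Lemma Dz_swap a : Dz (swap_xz a) = swap_xz (Dx a).
Proof. by rewrite unlock -ps_dxE -ps_dzE. Qed.

Lemma curl_dot_swap f g h :
  curl_dot (swap_xz h) (swap_xz g) (swap_xz f) = - swap_xz (curl_dot f g h).
Proof.
rewrite /curl_dot !Dx_swap !Dy_swap !Dz_swap.
by rewrite !swap_xzD !swap_xzM !swap_xzD !swap_xzN; ring.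
Qed.

Lemma m_exact_grad (f g h b d : ps3) :
  [/\ f = b * Dx d, g = b * Dy d & h = b * Dz d] -> m_exact f g h.
Proof. by case=> fE gE hE; exists b, d; rewrite !ps_mulE ps_dxE ps_dyE ps_dzE. Qed.

Unset Implicit Arguments.

Theorem lemma2p3 (f g h : ps) :
  poisson_triple f g h ->
  (in_max f + in_max g + in_max h <= 1)%N ->
  m_exact f g h.
Proof.
move=> /poisson_triple_curl_dot curl0 max_le1.
have [h_max | h_unit] := boolP (in_max h); last first.
  have [hi hiK] := ps3_unit h_unit.
  by have [b [d F_grad]] := curl_dot_exact hiK curl0; apply: m_exact_grad F_grad.
have f_unit : ~~ in_max f.
  by move: max_le1; rewrite h_max; case: (in_max f); case: (in_max g).
have [fi fiK] : exists fi, fi * swap_xz f = 1 by apply: ps3_unit; rewrite swap_xzE.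
have curl0' : curl_dot (swap_xz h) (swap_xz g) (swap_xz f) = 0.
  by rewrite curl_dot_swap curl0 swap_xz0 oppr0.
have [b [d [hE gE fE]]] := curl_dot_exact fiK curl0'.
apply: (m_exact_grad (b := swap_xz b) (d := swap_xz d)).
by rewrite Dx_swap Dy_swap Dz_swap -!swap_xzM -fE -gE -hE !swap_xzK.
Qed.
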